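(* Let $n$ be a positive integer and let $\mathcal M_{n^2}$ be the set of integer matrices $\begin{pmatrix}a&b\\c&d\end{pmatrix}$ with $ad-bc=n^2$ and $\gcd(a,b,c,d)=1$. A complete set of representatives of the inequivalent parabolic elements of $\mathcal M_{n^2}$ is $$\begin{pmatrix}n&a\\0&n\end{pmatrix},\qquad a=1,\dots,n,\ \gcd(a,n)=1.$$
   Context: An element of $\mathcal M_{n^2}$ is parabolic if it fixes exactly one point of $\mathbb P^1(\mathbb Q)$ and no other point of $\mathbb P^1(\mathbb C)$ (a single cusp). Two parabolic elements $\gamma_1,\gamma_2$ are equivalent if there exist $\sigma\in\mathrm{SL}(2,\mathbb Z)$ and $\alpha$ in the stabilizer in $\mathrm{SL}(2,\mathbb Z)$ of the cusp fixed by $\gamma_2$ such that $\sigma\gamma_1\sigma^{-1}=\alpha\gamma_2$. *)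

From HB Require Import structures.
From mathcomp Require Import all_boot all_order all_algebra all_field.
Set Implicit Arguments. Unset Strict Implicit. Unset Printing Implicit Defensive.
Import Order.TTheory GRing.Theory Num.Theory.
Local Open Scope ring_scope.

Definition ea (A : 'M[int]_2) : int := A 0 0.
Definition eb (A : 'M[int]_2) : int := A 0 1.
Definition ec (A : 'M[int]_2) : int := A 1 0.
Definition ed (A : 'M[int]_2) : int := A 1 1.

Definition inM (n : nat) (A : 'M[int]_2) : Prop :=
  ea A * ed A - eb A * ec A = (n ^ 2)%N%:Z /\
  gcdz (gcdz (ea A) (eb A)) (gcdz (ec A) (ed A)) = 1.

(* A fixes the point [x : y] of P^1(C) (Moebius action z |-> (az+b)/(cz+d)):
   [a x + b y : c x + d y] = [x : y], i.e. the 2x2 determinant vanishes. *)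
Definition fixesP1 (A : 'M[int]_2) (x y : algC) : Prop :=
  ((ea A)%:~R * x + (eb A)%:~R * y) * y = ((ec A)%:~R * x + (ed A)%:~R * y) * x.

Definition parabolic (A : 'M[int]_2) : Prop :=
  exists p q : rat, (p, q) != (0, 0) /\ fixesP1 A (ratr p) (ratr q) /\
    forall x y : algC, (x, y) != (0, 0) -> fixesP1 A x y ->
      x * ratr q = y * ratr p.

Definition equivalent (g1 g2 : 'M[int]_2) : Prop :=
  exists sigma alpha : 'M[int]_2,
    \det sigma = 1 /\ \det alpha = 1 /\
    (forall p q : rat, (p, q) != (0, 0) -> fixesP1 g2 (ratr p) (ratr q) ->
       fixesP1 alpha (ratr p) (ratr q)) /\
    sigma *m g1 = alpha *m g2 *m sigma.

Definition rep (n a : nat) : 'M[int]_2 :=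
  \matrix_(i < 2, j < 2)
    (if i == j then n%:Z else if (i < j)%N then a%:Z else 0).

(* A parabolic element fixes a unique cusp; moving that cusp to infinity by some sigma in SL2(Z)
   makes the element upper triangular, [[x, y], [0, z]]. Uniqueness of the fixed point forces
   x = z, the determinant then gives x = +-n, and primitivity gives gcd(y, n) = 1. Multiplying by
   [[+-1, f], [0, +-1]], which stabilises infinity, reduces y to a residue 1 <= a <= n. Two such
   normal forms are equivalent only if the conjugating sigma fixes infinity, which forces a = a'. *)
From mathcomp Require Import all_boot all_order all_algebra all_field.
From mathcomp Require Import zify ring.
Set Implicit Arguments. Unset Strict Implicit. Unset Printing Implicit Defensive.
Import GRing.Theory.
Local Open Scope ring_scope.

Definition mk2 (a b c d : int) : 'M[int]_2 :=
  \matrix_(i < 2, j < 2) if i == 0 then (if j == 0 then a else b) else (if j == 0 then c else d).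

Lemma ord2P (i : 'I_2) : i = 0 \/ i = 1.
Proof. by case: i => [[|[|k]]] Hk; [left|right|]; try apply/val_inj. Qed.

Lemma mk2_eta (A : 'M[int]_2) : A = mk2 (ea A) (eb A) (ec A) (ed A).
Proof.
apply/matrixP=> i j; rewrite mxE /ea /eb /ec /ed.
by case: (ord2P i) => ->; case: (ord2P j) => ->.
Qed.

Lemma mk2_inj a b c d a' b' c' d' :
  mk2 a b c d = mk2 a' b' c' d' -> [/\ a = a', b = b', c = c' & d = d'].
Proof.
move=> E; have := congr1 (fun M : 'M[int]_2 => (M 0 0, M 0 1, M 1 0, M 1 1)) E.
by rewrite !mxE /= => -[].
Qed.

Lemma mulmx_mk2 a b c d a' b' c' d' : mk2 a b c d *m mk2 a' b' c' d' =
  mk2 (a * a' + b * c') (a * b' + b * d') (c * a' + d * c') (c * b' + d * d').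
Proof.
apply/matrixP=> i j; rewrite !mxE !big_ord_recl big_ord0 !mxE /=.
by case: (ord2P i) => ->; case: (ord2P j) => ->; rewrite /= addr0.
Qed.

Lemma mk2_1 : mk2 1 0 0 1 = 1.
Proof. by apply/matrixP=> i j; rewrite !mxE; case: (ord2P i) => ->; case: (ord2P j) => ->. Qed.

Lemma det_mk2 a b c d : \det (mk2 a b c d) = a * d - b * c.
Proof.
rewrite (expand_det_row _ 0) !big_ord_recl big_ord0 /cofactor !det_mx11 !mxE /=.
by rewrite /bump /= expr0 expr1; ring.
Qed.

Lemma det_entries (A : 'M[int]_2) : \det A = ea A * ed A - eb A * ec A.
Proof. by rewrite {1}(mk2_eta A) det_mk2. Qed.

Lemma rep_mk2 n a : rep n a = mk2 n a 0 n.
Proof. by apply/matrixP=> i j; rewrite !mxE; case: (ord2P i) => ->; case: (ord2P j) => ->. Qed.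

Lemma unitz_cases (e g : int) : e * g = 1 -> (e = 1 /\ g = 1) \/ (e = -1 /\ g = -1).
Proof.
move=> eg1; have := intUnitRing.unitzPl eg1; rewrite /intUnitRing.unitz.
by case/orP=> /eqP g1; subst g; [left|right]; split; lia.
Qed.

Definition content (A : 'M[int]_2) : int :=
  gcdz (gcdz (ea A) (eb A)) (gcdz (ec A) (ed A)).

Lemma dvdz_content (d : int) (A : 'M[int]_2) :
  (forall i j, (d %| A i j)%Z) -> (d %| content A)%Z.
Proof. by move=> dA; rewrite !dvdz_gcd !dA. Qed.

Lemma dvdz_mulmxl (d : int) m n p (M : 'M[int]_(m, n)) (N : 'M[int]_(n, p)) :
  (forall i j, (d %| N i j)%Z) -> forall i j, (d %| (M *m N) i j)%Z.
Proof. by move=> dN i j; rewrite mxE; apply: rpred_sum => k _; apply: dvdz_mull. Qed.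

Lemma dvdz_mulmxr (d : int) m n p (M : 'M[int]_(m, n)) (N : 'M[int]_(n, p)) :
  (forall i j, (d %| M i j)%Z) -> forall i j, (d %| (M *m N) i j)%Z.
Proof. by move=> dM i j; rewrite mxE; apply: rpred_sum => k _; apply: dvdz_mulr. Qed.

Definition fixesZ (A : 'M[int]_2) (X Y : int) : Prop :=
  (ea A * X + eb A * Y) * Y = (ec A * X + ed A * Y) * X.

Lemma fixesP1_intr A (X Y : int) : fixesP1 A X%:~R Y%:~R <-> fixesZ A X Y.
Proof. by rewrite /fixesP1 /fixesZ -!intrM -!intrD -!intrM; split=> [/intr_inj|->]. Qed.

Lemma fixesP1_scale A (k x y : algC) : k != 0 -> fixesP1 A (k * x) (k * y) <-> fixesP1 A x y.
Proof.
move=> k0; rewrite /fixesP1.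
set a := (ea A)%:~R; set b := (eb A)%:~R; set c := (ec A)%:~R; set d := (ed A)%:~R.
have -> : (a * (k * x) + b * (k * y)) * (k * y) = (k * k) * ((a * x + b * y) * y) by ring.
have -> : (c * (k * x) + d * (k * y)) * (k * x) = (k * k) * ((c * x + d * y) * x) by ring.
by split=> [/(mulfI (mulf_neq0 k0 k0))|->].
Qed.

Lemma rat_point_primitive (p q : rat) : (p, q) != (0, 0) ->
  exists (u v s t : int) (k : rat),
    [/\ k != 0, p = k * u%:~R, q = k * v%:~R & u * s + v * t = 1].
Proof.
move=> pq0.
set u0 := numq p * denq q; set v0 := numq q * denq p; set D := denq p * denq q.
have D0 : (D%:~R : rat) != 0 by rewrite intr_eq0 mulf_neq0 ?denq_neq0.
have Dp : p * D%:~R = u0%:~R by rewrite /u0 /D !intrM numqE; ring.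
have Dq : q * D%:~R = v0%:~R by rewrite /v0 /D !intrM numqE; ring.
set g := gcdz u0 v0.
have g0 : g != 0.
  rewrite gcdz_eq0 /u0 /v0 !mulf_eq0 !denq_eq0 !orbF !numq_eq0.
  by apply: contra pq0 => /andP[/eqP-> /eqP->].
have [s [t Bez]] := Bezoutz u0 v0.
set u := (u0 %/ g)%Z; set v := (v0 %/ g)%Z.
have gu : u * g = u0 by apply/divzK/dvdz_gcdl.
have gv : v * g = v0 by apply/divzK/dvdz_gcdr.
exists u, v, s, t, (g%:~R / D%:~R); split.
- by rewrite mulf_neq0 ?invr_eq0 // intr_eq0.
- by apply: (mulIf D0); rewrite Dp -gu intrM; field.
- by apply: (mulIf D0); rewrite Dq -gv intrM; field.
- by apply: (mulIf g0); rewrite mul1r -[RHS]Bez -gu -gv; ring.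
Qed.

Lemma parabolic_primitive_cusp A : parabolic A ->
  exists u v s t : int, [/\ u * s + v * t = 1, fixesZ A u v &
    forall X Y : int, (X, Y) != (0, 0) -> fixesZ A X Y -> X * v = Y * u].
Proof.
case=> p [q [pq0]].
have [u [v [s [t [k [k0 -> -> Bez]]]]]] := rat_point_primitive pq0.
have k0C : (ratr k : algC) != 0 by rewrite fmorph_eq0.
case; rewrite !rmorphM /= !ratr_int (fixesP1_scale _ _ _ k0C) fixesP1_intr.
move=> fixuv uniq; exists u, v, s, t; split=> // X Y XY0 /fixesP1_intr fixXY.
have XY0C : ((X%:~R : algC), (Y%:~R : algC)) != (0, 0).
  by rewrite xpair_eqE !intr_eq0 -xpair_eqE.
have := uniq _ _ XY0C fixXY; rewrite mulrCA [_ * (ratr k * _)]mulrCA.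
by move/(mulfI k0C); rewrite -!intrM => /intr_inj.
Qed.

Section CuspAtInfinity.

Variables u v s t : int.
Hypothesis Bez : u * s + v * t = 1.

Let sigma := mk2 s t (-v) u.
Let sigma' := mk2 u (-t) v s.

Lemma det_sigma : \det sigma = 1.
Proof. by rewrite det_mk2 -Bez; ring. Qed.

Lemma sigma'K : sigma' *m sigma = 1.
Proof. by rewrite mulmx_mk2 -mk2_1 -Bez; congr mk2; ring. Qed.

Lemma sigmaK : sigma *m sigma' = 1.
Proof. by rewrite mulmx_mk2 -mk2_1 -Bez; congr mk2; ring. Qed.

Lemma triangularize A : fixesZ A u v -> exists x y z, A = sigma' *m mk2 x y 0 z *m sigma.
Proof.
move=> fixuv; set T := sigma *m A *m sigma'.
have T10 : T 1 0 = 0.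
  rewrite -[RHS](subrr ((ec A * u + ed A * v) * u)) -{2}fixuv.
  by rewrite /T {1}(mk2_eta A) !mulmx_mk2 !mxE /=; ring.
have TE : T = mk2 (T 0 0) (T 0 1) 0 (T 1 1) by rewrite -T10; apply: mk2_eta.
exists (T 0 0), (T 0 1), (T 1 1); rewrite -TE /T.
by rewrite !mulmxA sigma'K mul1mx -!mulmxA sigma'K mulmx1.
Qed.

Variables x y z : int.
Let A := sigma' *m mk2 x y 0 z *m sigma.

Lemma det_conj_triangular : \det A = x * z.
Proof.
have det_sigma' : \det sigma' = 1 by rewrite det_mk2 -Bez; ring.
by rewrite !det_mulmx det_sigma det_sigma' det_mk2 mulr1 mul1r mulr0 subr0.
Qed.

Lemma sigma_conj_triangular : sigma *m A = mk2 x y 0 z *m sigma.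
Proof. by rewrite /A !mulmxA sigmaK mul1mx. Qed.

(* (y, z - x) is an eigenvector of [[x, y], [0, z]], so A fixes its image sigma' (y, z - x),
   which is proportional to the cusp sigma' (1, 0) = (u, v) only when z = x. *)
Lemma cusp_unique_conj_triangular :
  (forall X Y : int, (X, Y) != (0, 0) -> fixesZ A X Y -> X * v = Y * u) -> z = x.
Proof.
move=> uniq; set X := u * y - t * (z - x); set Y := v * y + s * (z - x).
have XY : X * v = Y * u.
  have [/eqP[-> ->]|XY0] := boolP ((X, Y) == (0, 0)); first by rewrite !mul0r.
  apply: uniq XY0 _; rewrite /fixesZ /ea /eb /ec /ed /A /sigma /sigma' !mulmx_mk2 !mxE /=.
  by rewrite /X /Y; ring.
apply/eqP; rewrite -subr_eq0; apply/eqP.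
by rewrite -[z - x]mulr1 -Bez -[RHS](subrr (X * v)) {1}XY /X /Y; ring.
Qed.

Lemma dvdz_content_conj_triangular (d : int) :
  (d %| x)%Z -> (d %| y)%Z -> (d %| z)%Z -> (d %| content A)%Z.
Proof.
move=> dx dy dz; apply/dvdz_content/dvdz_mulmxr/dvdz_mulmxl => i j.
by rewrite !mxE; case: (ord2P i) => ->; case: (ord2P j) => ->.
Qed.

End CuspAtInfinity.

Lemma residue_1n (n : nat) (y : int) : (0 < n)%N ->
  exists (f : int) (a : nat), (1 <= a <= n)%N /\ y = f * n%:Z + a%:Z.
Proof.
move=> n0; have n0Z : n%:Z != 0 by lia.
have r0 := modz_ge0 (y - 1) n0Z.
have rn : ((y - 1) %% n%:Z)%Z < n%:Z by apply: ltz_pmod; lia.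
have yE := divz_eq (y - 1) n%:Z.
exists ((y - 1) %/ n%:Z)%Z, (absz ((y - 1) %% n%:Z)%Z).+1.
split; lia.
Qed.

Lemma scalar_triangular_rep (n : nat) (x y : int) : (0 < n)%N ->
  x * x = (n ^ 2)%N%:Z -> (forall d : int, (d %| x)%Z -> (d %| y)%Z -> (d %| 1)%Z) ->
  exists (a : nat) (e f : int),
    [/\ (1 <= a <= n)%N, coprime a n, e * e = 1 & mk2 x y 0 x = mk2 e f 0 e *m rep n a].
Proof.
move=> n0 xx prim.
have [e [ee xE]] : exists e : int, e * e = 1 /\ x = e * n%:Z.
  have : x = n%:Z \/ x = - n%:Z by nia.
  by case=> ->; [exists 1 | exists (-1)]; split; lia.
have [f [a [a1n yE]]] := residue_1n (e * y) n0.
have {}yE : y = e * (f * n%:Z + a%:Z) by rewrite -yE mulrA ee mul1r.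
exists a, e, (e * f); split=> //.
  have gn : ((gcdn a n)%:Z %| n%:Z)%Z by rewrite dvdzE dvdn_gcdr.
  have ga : ((gcdn a n)%:Z %| a%:Z)%Z by rewrite dvdzE dvdn_gcdl.
  have := prim (gcdn a n)%:Z; rewrite xE yE !dvdz_mull ?rpredD ?dvdz_mull //.
  by rewrite dvdz1 => /(_ isT isT).
by rewrite rep_mk2 mulmx_mk2 xE yE; congr mk2; ring.
Qed.

Lemma rep_fixesP1 n a (x y : algC) : (0 < a)%N -> fixesP1 (rep n a) x y -> y = 0.
Proof.
move=> a0; rewrite /fixesP1 /ea /eb /ec /ed rep_mk2 !mxE /= mulr0z => fixxy.
have a0C : ((a%:Z)%:~R : algC) != 0 by rewrite intr_eq0; apply/eqP; lia.
have : (a%:Z)%:~R * (y * y) = 0 :> algC.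
  by rewrite -[RHS](subrr ((n%:Z%:~R * x + a%:Z%:~R * y) * y)) {2}fixxy; ring.
by move/eqP; rewrite !mulf_eq0 (negbTE a0C) orbb => /eqP.
Qed.

Lemma triangular_fixesP1_infty (e f g : int) (x : algC) : fixesP1 (mk2 e f 0 g) x 0.
Proof. by rewrite /fixesP1 /ea /eb /ec /ed !mxE /= mulr0z; ring. Qed.

Lemma rep_fixesP1_infty n a (x : algC) : fixesP1 (rep n a) x 0.
Proof. by rewrite rep_mk2; apply: triangular_fixesP1_infty. Qed.

Lemma rep_inM n a : (0 < n)%N -> coprime a n -> inM n (rep n a).
Proof.
move=> n0 co; rewrite /inM /ea /eb /ec /ed rep_mk2 !mxE /=; split.
  by rewrite mulr0 subr0 -PoszM expnS expn1.
by rewrite /gcdz /= gcd0n (gcdnC n a) (eqP co) gcd1n.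
Qed.

Lemma rep_parabolic n a : (0 < a)%N -> parabolic (rep n a).
Proof.
move=> a0; exists 1, 0; rewrite rmorph0 rmorph1; split=> //.
split=> [|x y _ /(rep_fixesP1 a0) ->]; last by rewrite mulr0 mul0r.
exact: rep_fixesP1_infty.
Qed.

Lemma inM_parabolic_equivalent_rep n A : (0 < n)%N -> inM n A -> parabolic A ->
  exists a : nat, [/\ (1 <= a <= n)%N, coprime a n & equivalent A (rep n a)].
Proof.
move=> n0 [detA primA] /parabolic_primitive_cusp[u [v [s [t [Bez fixuv uniq]]]]].
have [x [y [z AE]]] := triangularize Bez fixuv.
have xz : x * z = (n ^ 2)%N%:Z.
  by rewrite -(det_conj_triangular Bez x y z) -AE det_entries.
rewrite AE in uniq; have zx := cusp_unique_conj_triangular Bez uniq; subst z.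
have prim d : (d %| x)%Z -> (d %| y)%Z -> (d %| 1)%Z.
  move=> dx dy; have := @dvdz_content_conj_triangular u v s t x y x d dx dy dx.
  by rewrite -AE /content primA.
have [a [e [f [a1n co ee Trep]]]] := scalar_triangular_rep n0 xz prim.
exists a; split=> //; exists (mk2 s t (-v) u), (mk2 e f 0 e); split; [|split; [|split]].
- exact: det_sigma Bez.
- by rewrite det_mk2 mulr0 subr0.
- case/andP: a1n => a0 _ p q _ /(rep_fixesP1 a0) ->.
  exact: triangular_fixesP1_infty.
- by rewrite AE (sigma_conj_triangular Bez) Trep.
Qed.

Lemma SL2_fixing_infty (al : 'M[int]_2) :
  \det al = 1 -> fixesZ al 1 0 -> exists e f : int, e * e = 1 /\ al = mk2 e f 0 e.
Proof.
rewrite det_entries /fixesZ (mk2_eta al) /ea /eb /ec /ed !mxE /=.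
move: (al 0 0) (al 0 1) (al 1 0) (al 1 1) => e f c g detal.
rewrite !mulr0 !mulr1 !addr0 => /esym c0; subst c.
move: detal; rewrite mulr0 subr0 => /unitz_cases[[-> ->]|[-> ->]];
  by [exists 1, f | exists (-1), f].
Qed.

Lemma rep_conj_inj (n a a' : nat) (sigma : 'M[int]_2) (e f : int) : (0 < n)%N ->
  (1 <= a <= n)%N -> (1 <= a' <= n)%N -> coprime a' n -> e * e = 1 -> \det sigma = 1 ->
  sigma *m rep n a = mk2 e f 0 e *m rep n a' *m sigma -> a = a'.
Proof.
move=> n0 a1n a'1n co' ee; rewrite det_entries; move: (mk2_eta sigma).
move: (ea sigma) (eb sigma) (ec sigma) (ed sigma) => P Q R S -> detPS.
rewrite !rep_mk2 !mulmx_mk2 => /mk2_inj[E1 E2 E3 E4].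
have e1 : e = 1.
  have [//|em1] : e = 1 \/ e = -1 by nia.
  subst e; have R0 : R = 0 by nia.
  have P0 : P = 0 by move: E1; rewrite R0; nia.
  by move: detPS; rewrite P0 R0; lia.
subst e; have : (a'%:Z + f * n%:Z) * R = 0 by nia.
move/eqP; rewrite mulf_eq0 => /orP[/eqP a'fn|/eqP R0].
  have f1 : f + 1 = 0 by nia.
  have a'n : a' = n by lia.
  by move: co'; rewrite a'n /coprime gcdnn => /eqP n1; lia.
have [[P1 S1]|[P1 S1]] : (P = 1 /\ S = 1) \/ (P = -1 /\ S = -1).
  by apply: unitz_cases; move: detPS; rewrite R0 mulr0 subr0.
all: have f0 : f = 0 by move: E2; rewrite P1 S1; nia.
all: by move: E2; rewrite P1 S1 f0; lia.
Qed.

Lemma rep_equivalent_inj (n a a' : nat) : (0 < n)%N ->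
  (1 <= a <= n)%N -> (1 <= a' <= n)%N -> coprime a' n ->
  equivalent (rep n a) (rep n a') -> a = a'.
Proof.
move=> n0 a1n a'1n co' [sigma [al [detsigma [detal [stab conj]]]]].
have : fixesZ al 1 0.
  apply/fixesP1_intr; have := stab 1 0 isT; rewrite rmorph1 rmorph0.
  by move/(_ (rep_fixesP1_infty _ _ _)); rewrite mulr1z.
case/(SL2_fixing_infty detal) => e [f [ee alE]].
by apply: (rep_conj_inj (f := f) n0 a1n a'1n co' ee detsigma); rewrite -alE.
Qed.

Theorem lemma4 (n : nat) (hn : (0 < n)%N) :
  (forall a : nat, (1 <= a <= n)%N -> coprime a n ->
      inM n (rep n a) /\ parabolic (rep n a)) /\
  (forall A : 'M[int]_2, inM n A -> parabolic A ->
      exists a : nat, [/\ (1 <= a <= n)%N, coprime a n & equivalent A (rep n a)]) /\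
  (forall a a' : nat, (1 <= a <= n)%N -> coprime a n ->
      (1 <= a' <= n)%N -> coprime a' n ->
      equivalent (rep n a) (rep n a') -> a = a').
Proof.
split; [|split].
- move=> a /andP[a0 _] co; split; [exact: rep_inM | exact: rep_parabolic].
- by move=> A; apply: inM_parabolic_equivalent_rep.
- by move=> a a' a1n _ a'1n co'; apply: rep_equivalent_inj.
Qed.
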